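(* Let $G$ and $H$ be word-representable graphs with $|G| \ge |H|$. Then $l(G \,\square\, H) \le |H|\,l(G) + |G|\,l(H) + (|H|^2 - 1)|G|$.
   Context: All graphs are simple and undirected; $|G|$ denotes the number of vertices of $G$. Letters $x,y$ alternate in a word $w$ if deleting all other letters from $w$ yields $xyxy\ldots$ or $yxyx\ldots$ (of either parity). A word $w$ over $V(G)$ represents $G$ if every vertex occurs in $w$ and for all distinct $x,y$, $xy\in E(G)$ iff $x,y$ alternate in $w$; $G$ is word-representable if such a word exists, and $l(G)$ is the minimum length of a word representing $G$. The Cartesian product $G\,\square\,H$ has vertex set $V(G)\times V(H)$, with $(u,v)$ adjacent to $(u',v')$ iff either $u=u'$ and $vv'\in E(H)$, or $v=v'$ and $uu'\in E(G)$. *)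

From mathcomp Require Import all_boot.
Set Implicit Arguments. Unset Strict Implicit. Unset Printing Implicit Defensive.

Definition simple_graph (T : finType) (e : rel T) : Prop :=
  symmetric e /\ irreflexive e.

(* x and y alternate in w: deleting all letters other than x,y from w yields
   xyxy... or yxyx..., i.e. no two consecutive letters of the restricted word
   are equal. *)
Definition alternate (T : eqType) (w : seq T) (x y : T) : bool :=
  sorted (fun a b => a != b) (filter (fun z => (z == x) || (z == y)) w).

Definition represents (T : finType) (e : rel T) (w : seq T) : Prop :=
  (forall v : T, v \in w) /\
  (forall x y : T, x != y -> (e x y <-> alternate w x y)).

Definition word_representable (T : finType) (e : rel T) : Prop :=
  exists w, represents e w.

Definition is_min_rep_length (T : finType) (e : rel T) (n : nat) : Prop :=
  (exists w, represents e w /\ size w = n) /\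
  (forall w, represents e w -> n <= size w).

Definition cart_rel (T U : finType) (eG : rel T) (eH : rel U) : rel (T * U) :=
  fun p q => ((p.1 == q.1) && eH p.2 q.2) || ((p.2 == q.2) && eG p.1 q.1).

From mathcomp Require Import all_boot zify.
Set Implicit Arguments. Unset Strict Implicit. Unset Printing Implicit Defensive.

(* Let g and h be shortest words representing G and H, pi the letters of g in
   order of first occurrence, and a * b the word of all pairs (z, w), z running
   over a in the outer loop and w over b.  Read h letter by letter, emitting
   pi * [:: c] for each letter c and, just before the last occurrence of every
   letter but the first one to occur for the last time, pi * sigma for a
   permutation sigma of the letters of h; end with g * (letters of h).
   Row x of this word is h with permutations inserted and appended, each
   restricting to every pair {u, v} as the pattern h is in at that point, so it
   alternates on u, v iff h does.  Column u is copies of pi followed by g, and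
   pi restricted to {x, y} begins like g.  For x <> y and u <> v the blocks at
   the last occurrence of u or v in h create two equal consecutive letters.
   With at most |H| - 1 inserted blocks the length is at most
   |G| l(H) + (|H| - 1) |H| |G| + |H| l(G). *)

Section SeqFacts.
Variable A : eqType.
Implicit Types (a x : A) (s t : seq A).

Lemma last_rev x s : last x (rev s) = head x s.
Proof. by case: s => //= z s; rewrite rev_cons last_rcons. Qed.

Lemma last_undup x s : last x (undup s) = last x s.
Proof.
elim: s x => //= z s IH x; case: ifP => zs; last by rewrite /= IH.
by case: s zs IH => // z' s _ ->.
Qed.

Definition undup_first s := rev (undup (rev s)).

Lemma mem_undup_first s : undup_first s =i s.
Proof. by move=> z; rewrite mem_rev mem_undup mem_rev. Qed.

Lemma undup_first_uniq s : uniq (undup_first s).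
Proof. by rewrite rev_uniq undup_uniq. Qed.

Lemma filter_undup_first (P : pred A) s :
  filter P (undup_first s) = undup_first (filter P s).
Proof. by rewrite filter_rev filter_undup filter_rev. Qed.

Lemma filter_pred1_if s a :
  uniq s -> filter (pred1 a) s = if a \in s then [:: a] else [::].
Proof.
move=> Us; case: ifP => [|sa]; first exact: filter_pred1_uniq.
by apply/eqP; rewrite -size_eq0 size_filter; apply/eqP/count_memPn; rewrite sa.
Qed.

Lemma split_last (P : pred A) s :
  has P s -> exists s1 d s3, [/\ s = s1 ++ d :: s3, P d & ~~ has P s3].
Proof.
elim/last_ind: s => // s z IH; rewrite has_rcons; case Pz: (P z) => /= Ps.
  by exists s, z, [::]; rewrite cats1.
have [s1 [d [s3 [-> Pd Ps3]]]] := IH Ps.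
by exists s1, d, (rcons s3 z); rewrite rcons_cat has_rcons Pz.
Qed.

Lemma head_flatten a (ss : seq (seq A)) :
  {in ss, forall s, head a s = a} -> head a (flatten ss) = a.
Proof.
elim: ss => //= s ss IH hss; case: s hss => [|b s] hss /=.
  by apply: IH => s' s's'; apply: hss; rewrite inE s's' orbT.
exact: (hss (b :: s) (mem_head _ _)).
Qed.

End SeqFacts.

Lemma flatten_nseq_if (S : Type) (T : eqType) (P : pred T) (L : seq S) (ss : seq T) :
  flatten [seq if P s then L else [::] | s <- ss] = flatten (nseq (count P ss) L).
Proof. by elim: ss => //= s ss ->; case: (P s). Qed.

Section Alternation.
Variable A : eqType.
Implicit Types (a b p q u v : A) (s w y z : seq A).

Definition alternating s := sorted (fun a b => a != b) s.

Lemma alternateE w u v : alternate w u v = alternating (filter (pred2 u v) w).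
Proof. by []. Qed.

Lemma alternateC w u v : alternate w u v = alternate w v u.
Proof. by rewrite /alternate (@eq_filter _ _ (pred2 v u)) // => z /=; rewrite orbC. Qed.

Lemma alternate_filter (P : pred A) w u v :
  P u -> P v -> alternate (filter P w) u v = alternate w u v.
Proof.
move=> Pu Pv; rewrite /alternate -filter_predI; congr sorted; apply: eq_filter => z /=.
by case: (eqVneq z u) => [->|_] //=; case: (eqVneq z v) => [->|_]; rewrite ?andbF.
Qed.

Lemma alternate_map (B : eqType) (f : A -> B) w u v :
  injective f -> alternate (map f w) (f u) (f v) = alternate w u v.
Proof.
move=> injf; rewrite /alternate filter_map (@eq_filter _ _ (pred2 u v)); last first.
  by move=> z /=; rewrite !inj_eq.
rewrite /alternating sorted_map; case: (filter _ _) => //= z s.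
by apply: eq_path => a b /=; rewrite inj_eq.
Qed.

Lemma alternating_dup s t a : ~~ alternating (s ++ a :: a :: t).
Proof.
elim: s => [|b s IH]; first by rewrite /alternating /= eqxx.
by apply: contra IH => /path_sorted.
Qed.

Lemma not_alternating_repeat s r t a :
  head a r = a -> ~~ alternating (s ++ a :: r ++ a :: t).
Proof. by case: r => [|b r] /= => [_|->]; apply: alternating_dup. Qed.

(* [last q z = q] says that z is empty or ends with q. *)
Lemma alternating_pairs k p q z y : p != q -> last q z = q -> (z = [::] -> head p y = p) ->
  alternating (z ++ flatten (nseq k [:: p; q]) ++ y) = alternating (z ++ y).
Proof.
move=> pq lz hy; elim: k => //= k <-; set r := _ ++ y.
have hr : z = [::] -> head p r = p by rewrite /r; case: (k) => //=.
clearbody r.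
case: z lz hy hr => [|z0 z] /= lz _ hr.
  case: r hr => [|r0 r] /=; first by rewrite /alternating /= pq.
  by move/(_ erefl) ->; rewrite /alternating /= pq eq_sym pq.
by rewrite /alternating /= !cat_path /= lz eq_sym pq.
Qed.

End Alternation.

Section TwoLetters.
Variables (A : eqType) (u v : A).
Hypothesis uv : u != v.
Implicit Types (a d : A) (s : seq A).

Definition other d := if d == u then v else u.

Lemma other_neq d : other d != d.
Proof. by rewrite /other; case: (eqVneq d u) => [->|]; rewrite 1?eq_sym. Qed.

Lemma other_eq a d : pred2 u v a -> pred2 u v d -> a != d -> a = other d.
Proof.
rewrite /other => /pred2P[]-> /pred2P[]->; rewrite ?eqxx //= => _.
by rewrite eq_sym (negbTE uv).
Qed.

Lemma undup_pair s : all (pred2 u v) s -> u \in s -> v \in s ->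
  undup s = [:: other (last u s); last u s].
Proof.
move=> s2 us vs; have: perm_eq (undup s) [:: u; v].
  apply: uniq_perm; rewrite ?undup_uniq //= ?inE ?uv // => z.
  rewrite mem_undup !inE; apply/idP/idP => [/(allP s2)//|/orP[]/eqP->//].
move/perm_size; case Es: (undup s) => [|a [|b []]] //= _.
have sab : {subset [:: a; b] <= s} by move=> z; rewrite -Es mem_undup.
have ab : a != b by have := undup_uniq s; rewrite Es /= inE andbT.
rewrite -(last_undup u) Es /= (other_eq _ _ ab) //; apply: (allP s2); apply: sab.
  by rewrite mem_head.
by rewrite !inE eqxx orbT.
Qed.

Lemma undup_first_pair s : all (pred2 u v) s -> u \in s -> v \in s ->
  undup_first s = [:: head u s; other (head u s)].
Proof.
move=> s2 us vs.
by rewrite /undup_first undup_pair ?all_rev ?mem_rev // last_rev.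
Qed.

End TwoLetters.

Section Blocks.
Variable U : eqType.
Implicit Types (al be : seq U) (c : U).

(* [undup] keeps last occurrences, so this lists the letters of be missing
   from al by first occurrence, then those of al by last occurrence.  On a pair
   {u, v} it thus reads [:: other d; d] for d the last of u, v in al, or, when
   neither occurs in al, u and v in the order they first appear in be. *)
Definition cut_perm al be := undup (undup_first be ++ al).

(* c occurs for the last time, and is not the first letter to do so; this
   bounds the number of insertions by |undup be| - 1 (ninserts_lt). *)
Definition insert_point al c be := (c \notin be) && has (fun z => z \notin c :: be) al.

Fixpoint blocks al be : seq (seq U) :=
  if be is c :: be' then
    (if insert_point al c be' then [:: cut_perm al be] else [::]) ++
    [:: c] :: blocks (rcons al c) be'
  else [::].

Fixpoint ninserts al be : nat :=
  if be is c :: be' then insert_point al c be' + ninserts (rcons al c) be' else 0.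

Lemma mem_cut_perm al be : cut_perm al be =i al ++ be.
Proof. by move=> z; rewrite mem_undup !mem_cat mem_undup_first orbC. Qed.

Lemma filter_cut_perm u v al be : u != v -> u \in al ++ be -> v \in al ++ be ->
  exists p q, [/\ filter (pred2 u v) (cut_perm al be) = [:: p; q], p != q,
    last q (filter (pred2 u v) al) = q &
    (filter (pred2 u v) al = [::] -> exists t, filter (pred2 u v) be = p :: t)].
Proof.
move=> uv ui vi; set S := filter (pred2 u v) (undup_first be ++ al).
have S2 : all (pred2 u v) S by apply: filter_all.
have memS z : pred2 u v z -> z \in al ++ be -> z \in S.
  by rewrite mem_filter !mem_cat mem_undup_first orbC => ->.
have uS : u \in S by apply: memS; rewrite /= ?eqxx.
have vS : v \in S by apply: memS; rewrite /= ?eqxx ?orbT.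
rewrite /cut_perm filter_undup -/S.
case/lastP E: (filter (pred2 u v) al) => [|r d].
  move: uS vS; rewrite /S filter_cat E cats0 filter_undup_first !mem_undup_first.
  case Eb: (filter (pred2 u v) be) => [|p t] // uS vS.
  rewrite undup_id ?undup_first_uniq // (undup_first_pair uv) //=; last first.
    by have := filter_all (pred2 u v) be; rewrite Eb.
  exists p, (other u v p); split => //; first by rewrite eq_sym other_neq.
  by exists t.
have lS : last u S = d by rewrite /S filter_cat E last_cat last_rcons.
exists (other u v d), d; rewrite (undup_pair uv) // lS last_rcons.
by split; rewrite ?other_neq //; case: (r).
Qed.

Lemma blocks_suffix al be1 be2 :
  exists X, blocks al (be1 ++ be2) = X ++ blocks (al ++ be1) be2.
Proof.
elim: be1 al => [|c be1 IH] al /=; first by exists [::]; rewrite cats0.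
have [X ->] := IH (rcons al c); rewrite cat_rcons.
by eexists; rewrite -[_ :: X ++ _]cat_cons catA.
Qed.

Lemma blocks_uniq al be B : B \in blocks al be -> uniq B.
Proof.
elim: be al => //= c be IH al; rewrite mem_cat inE => /orP[|/orP[/eqP->//|/IH//]].
by case: ifP; rewrite // inE => _ /eqP->; apply: undup_uniq.
Qed.

Lemma blocks_shape al be B : B \in blocks al be ->
  (exists2 c, c \in be & B = [:: c]) \/ {subset al <= B}.
Proof.
elim: be al => //= c be IH al; rewrite mem_cat inE => /orP[|/orP[/eqP->|/IH[]]].
- case: ifP; rewrite // inE => _ /eqP-> ; right=> z zal.
  by rewrite mem_cut_perm mem_cat zal.
- by left; exists c; rewrite ?mem_head.
- by case=> c' c'be ->; left; exists c'; rewrite // inE c'be orbT.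
- by move=> sub; right=> z zal; apply: sub; rewrite mem_rcons inE zal orbT.
Qed.

Section Rows.
Variables u v : U.
Hypothesis uv : u != v.
Local Notation restr := (filter (pred2 u v)).

Lemma filter_pred2_nil s : restr s = [::] -> u \notin s.
Proof.
move=> s0; apply/negP => us.
by have := mem_filter (pred2 u v) u s; rewrite s0 us /= eqxx.
Qed.

Lemma head_filter_blocks al c be t p : restr al = [::] ->
  u \in al ++ c :: be -> v \in al ++ c :: be -> head p (restr (c :: be)) = p ->
  head p (restr (c :: flatten (blocks (rcons al c) be) ++ t)) = p.
Proof.
elim: be al c => [|c' be IH] al c al0 ui vi hp /=; case: ifP => c2.
- by move: hp; rewrite /= c2.
- move: ui; rewrite mem_cat inE (negbTE (filter_pred2_nil al0)) /=.
  by move=> /eqP uc; move: c2; rewrite -uc eqxx.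
- by move: hp; rewrite /= c2.
have {}hp : head p (restr (c' :: be)) = p by move: hp; rewrite /= c2.
have al0' : restr (rcons al c) = [::] by rewrite filter_rcons /= c2.
have ui' : u \in rcons al c ++ c' :: be by rewrite cat_rcons.
have vi' : v \in rcons al c ++ c' :: be by rewrite cat_rcons.
rewrite flatten_cat -catA; case: ifP => _ /=; last exact: IH.
have [p' [q' [E _ _ /(_ al0') [t' Et']]]] := filter_cut_perm uv ui' vi'.
by move: hp; rewrite Et' !filter_cat E /= => ->.
Qed.

Lemma alternating_filter_blocks k al be : u \in al ++ be -> v \in al ++ be ->
  alternating
    (restr (al ++ flatten (blocks al be) ++ flatten (nseq k (undup (al ++ be))))) =
  alternating (restr (al ++ be)).
Proof.
elim: be al => [|c be IH] al ui vi.
  rewrite cats0 in ui vi; rewrite /= !cats0 filter_cat filter_flatten map_nseq filter_undup.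
  case/lastP E: (restr al) => [|r d]; first by move: (filter_pred2_nil E); rewrite ui.
  have memE z : pred2 u v z -> z \in al -> z \in rcons r d by rewrite -E mem_filter => ->.
  have s2 : all (pred2 u v) (rcons r d) by rewrite -E filter_all.
  rewrite (undup_pair uv s2) ?memE /= ?eqxx ?orbT // last_rcons.
  have := alternating_pairs k (other_neq uv d) (last_rcons d r d) (y := [::]).
  by rewrite !cats0 => ->.
rewrite -[al ++ c :: be]cat_rcons -IH ?cat_rcons //= flatten_cat -catA.
case: ifP => _ //=; rewrite cats0.
have [p [q [E pq lq hq]]] := filter_cut_perm uv ui vi.
rewrite !filter_cat E; apply: (alternating_pairs 1) => // al0.
by have [t Et] := hq al0; apply: head_filter_blocks; rewrite // Et.
Qed.

End Rows.

Lemma ninserts_le al be : ninserts al be <= size (undup be).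
Proof.
elim: be al => //= c be IH al; rewrite /insert_point.
by case: ifP => cbe /=; rewrite ?add0n // -add1n leq_add ?leq_b1.
Qed.

Lemma ninserts_lt al be :
  be != [::] -> {subset al <= be} -> ninserts al be < size (undup be).
Proof.
elim: be al => //= c be IH al _ sub; rewrite /insert_point.
case: ifP => cbe /=.
  apply: IH => [|z]; first by case: (be) cbe.
  by rewrite mem_rcons inE => /orP[/eqP->//|/sub]; rewrite inE => /orP[/eqP->|].
have -> : has (fun z => z \notin c :: be) al = false.
  by apply/negbTE/hasPn => z /sub ->.
by rewrite ltnS ninserts_le.
Qed.

End Blocks.

Lemma uniq_size_le_card (T : finType) (s : seq T) : uniq s -> size s <= #|T|.
Proof. by move=> Us; rewrite -(card_uniqP Us) max_card. Qed.

Lemma sum_size_blocks (U : finType) (al be : seq U) :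
  sumn [seq size B | B <- blocks al be] <= size be + ninserts al be * #|U|.
Proof.
elim: be al => //= c be IH al; rewrite map_cat sumn_cat.
have := IH (rcons al c); case: insert_point => /=; last by lia.
have := uniq_size_le_card (undup_uniq (undup_first (c :: be) ++ al)).
by move=> ha hS; rewrite addn0 mulnDl mul1n [leqRHS]addnCA leq_add // add1n addSn ltnS.
Qed.

Section PairSequences.
Variables T U : eqType.
Implicit Types (a : seq T) (B : seq U) (x y : T) (u v : U).

Lemma filter_fst_allpairs x a B :
  filter (fun p => p.1 == x) [seq (z, w) | z <- a, w <- B] =
  flatten (nseq (count_mem x a) [seq (x, w) | w <- B]).
Proof.
elim: a => //= z a IH; rewrite filter_cat IH filter_map; case: (eqVneq z x) => [->|zx] /=.
  by rewrite (@eq_filter _ _ predT) ?filter_predT // => w /=; rewrite eqxx.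
by rewrite (@eq_filter _ _ pred0) ?filter_pred0 // => w /=; rewrite (negbTE zx).
Qed.

Lemma filter_snd_allpairs u a B : uniq B ->
  filter (fun p => p.2 == u) [seq (z, w) | z <- a, w <- B] =
  if u \in B then [seq (z, u) | z <- a] else [::].
Proof.
move=> uB; elim: a => [|z a IH] /=; first by case: ifP.
rewrite filter_cat IH filter_map (@eq_filter _ _ (pred1 u)) // filter_pred1_if //.
by case: ifP.
Qed.

Lemma filter_pred2_allpairs x y u v a B :
  filter (pred2 (x, u) (y, v)) [seq (z, w) | z <- a, w <- B] =
  filter (pred2 (x, u) (y, v)) [seq (z, w) | z <- filter (pred2 x y) a, w <- B].
Proof.
elim: a => //= z a IH; rewrite filter_cat IH; case: ifP => zxy; first by rewrite filter_cat.
rewrite filter_map (@eq_filter _ _ pred0) ?filter_pred0 // => w /=.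
by rewrite !xpair_eqE; move: zxy => /norP[/negbTE-> /negbTE->].
Qed.

Lemma filter_pred2_row x y u v B : x != y -> uniq B ->
  filter (pred2 (x, u) (y, v)) [seq (x, w) | w <- B] =
  if u \in B then [:: (x, u)] else [::].
Proof.
move=> xy uB; rewrite filter_map (@eq_filter _ _ (pred1 u)) ?filter_pred1_if //.
  by case: ifP.
by move=> w /=; rewrite !xpair_eqE eqxx (negbTE xy) orbF.
Qed.

Lemma filter_pred2_allpairs_pair x y u v a B :
  x != y -> uniq B -> filter (pred2 x y) a = [:: x; y] ->
  filter (pred2 (x, u) (y, v)) [seq (z, w) | z <- a, w <- B] =
  (if u \in B then [:: (x, u)] else [::]) ++ (if v \in B then [:: (y, v)] else [::]).
Proof.
move=> xy uB axy; rewrite filter_pred2_allpairs axy /= cats0 filter_cat filter_pred2_row //.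
rewrite (@eq_filter _ _ (pred2 (y, v) (x, u))) ?filter_pred2_row 1?eq_sym //.
by move=> p /=; rewrite orbC.
Qed.

Lemma filter_pred2_allpairs_head x y u v a B s :
  x != y -> uniq B -> u \in B -> filter (pred2 x y) a = x :: s ->
  exists t, filter (pred2 (x, u) (y, v)) [seq (z, w) | z <- a, w <- B] = (x, u) :: t.
Proof.
move=> xy uB uin axy; rewrite filter_pred2_allpairs axy /= filter_cat filter_pred2_row //.
by rewrite uin; eexists.
Qed.

Lemma size_flatten_allpairs a (bs : seq (seq U)) :
  size (flatten [seq [seq (z, w) | z <- a, w <- B] | B <- bs]) =
  size a * sumn [seq size B | B <- bs].
Proof.
by elim: bs => [|B bs IH] /=; rewrite ?muln0 // size_cat size_allpairs IH mulnDr.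
Qed.

End PairSequences.

Section CartesianWord.
Variables T U : eqType.
Implicit Types (g : seq T) (h : seq U).

Definition cart_word g h : seq (T * U) :=
  flatten [seq [seq (z, w) | z <- undup_first g, w <- B] | B <- blocks [::] h] ++
  [seq (z, w) | z <- g, w <- undup h].

Lemma mem_cart_word g h x u : x \in g -> u \in h -> (x, u) \in cart_word g h.
Proof. by move=> xg uh; rewrite mem_cat allpairs_f ?mem_undup ?orbT. Qed.

Lemma cart_word_row g h x u v : x \in g -> u != v -> u \in h -> v \in h ->
  alternate (cart_word g h) (x, u) (x, v) = alternate h u v.
Proof.
move=> xg uv uh vh; rewrite -(@alternate_filter _ (fun p => p.1 == x)) ?eqxx //.
have -> : filter (fun p => p.1 == x) (cart_word g h) =
    [seq (x, w) | w <- flatten (blocks [::] h) ++ flatten (nseq (count_mem x g) (undup h))].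
  rewrite filter_cat filter_flatten -map_comp (@eq_map _ _ _ (map (pair x))).
    by rewrite filter_fst_allpairs map_cat !map_flatten map_nseq.
  move=> B /=; rewrite filter_fst_allpairs count_uniq_mem ?undup_first_uniq //.
  by rewrite mem_undup_first xg /= cats0.
rewrite (alternate_map (f := pair x)); last by move=> ? ? [].
exact: (alternating_filter_blocks uv _ (al := [::]) uh vh).
Qed.

Lemma cart_word_col g h x y u : x != y -> x \in g -> y \in g -> u \in h ->
  alternate (cart_word g h) (x, u) (y, u) = alternate g x y.
Proof.
move=> xy xg yg uh; rewrite -(@alternate_filter _ (fun p => p.2 == u)) ?eqxx //.
set K := count (fun B => u \in B) (blocks [::] h).
have -> : filter (fun p => p.2 == u) (cart_word g h) =
    [seq (z, u) | z <- flatten (nseq K (undup_first g)) ++ g].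
  rewrite filter_cat filter_flatten -map_comp.
  have /eq_in_map-> : {in blocks [::] h,
      filter (fun p => p.2 == u) \o (fun B => [seq (z, w) | z <- undup_first g, w <- B]) =1
      fun B => if u \in B then [seq (z, u) | z <- undup_first g] else [::]}.
    by move=> B /blocks_uniq uB /=; rewrite filter_snd_allpairs.
  rewrite flatten_nseq_if filter_snd_allpairs ?undup_uniq // mem_undup uh.
  by rewrite map_cat map_flatten map_nseq.
rewrite (alternate_map (f := pair^~ u)); last by move=> ? ? [].
rewrite !alternateE filter_cat filter_flatten map_nseq filter_undup_first.
have xgxy : x \in filter (pred2 x y) g by rewrite mem_filter /= eqxx.
have ygxy : y \in filter (pred2 x y) g by rewrite mem_filter /= eqxx orbT.
have := filter_all (pred2 x y) g.
case: (filter (pred2 x y) g) xgxy ygxy => [|p s] // xs ys s2.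
rewrite (undup_first_pair xy) //=.
by apply: (alternating_pairs _ (z := [::])); rewrite // eq_sym other_neq.
Qed.

Lemma cart_word_cross_head g h x y u v s : x != y -> u != v -> y \in g -> u \in h ->
  v \in h -> filter (pred2 x y) g = x :: s -> ~~ alternate (cart_word g h) (x, u) (y, v).
Proof.
move=> xy uv yg uh vh Es; rewrite alternateE.
have pg : filter (pred2 x y) (undup_first g) = [:: x; y].
  have s2 : all (pred2 x y) (x :: s) by rewrite -Es filter_all.
  have ys : y \in x :: s by rewrite -Es mem_filter /= eqxx orbT.
  by rewrite filter_undup_first Es (undup_first_pair xy) ?mem_head //= /other eqxx.
have uh' : u \in undup h by rewrite mem_undup.
have [t finalE] := filter_pred2_allpairs_head v xy (undup_uniq h) uh' Es.
have : has (pred2 u v) h by apply/hasP; exists u; rewrite /= ?eqxx.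
case/split_last => h1 [d [h3 [Eh d2 /hasPn h3n]]].
have [X EX] := blocks_suffix [::] h1 (d :: h3).
rewrite /cart_word filter_cat finalE filter_flatten -map_comp Eh EX map_cat flatten_cat /=.
set C := (_ \o _).
have CE B (uB : uniq B) : C B = _ := filter_pred2_allpairs_pair u v xy uB pg.
rewrite -catA map_cat flatten_cat /= CE //.
case/pred2P: d2 => ?; subst d.
  rewrite mem_head inE eq_sym (negbTE uv) /= -!catA /= catA.
  apply: not_alternating_repeat; apply: head_flatten => _ /mapP[B BR ->].
  rewrite CE ?(blocks_uniq BR) //; case: (blocks_shape BR) => [[c ch3 ->]|sub].
    have /norP[cu cv] := h3n c ch3.
    by rewrite !inE eq_sym (negbTE cu) eq_sym (negbTE cv).
  by rewrite sub // mem_rcons mem_head.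
have uh3 : u \notin h3 by apply/negP => /h3n; rewrite /= eqxx.
have vh3 : v \notin h3 by apply/negP => /h3n; rewrite /= eqxx orbT.
have uh1 : u \in h1 by move: uh; rewrite Eh mem_cat inE (negbTE uv) (negbTE uh3) !orbF.
have -> : insert_point h1 v h3.
  by rewrite /insert_point vh3; apply/hasP; exists u; rewrite // inE (negbTE uv).
rewrite /= CE ?undup_uniq // !mem_cut_perm -Eh uh vh mem_head inE (negbTE uv) /=.
by rewrite -cat1s catA alternating_dup.
Qed.

Lemma cart_word_cross g h x y u v : x != y -> u != v -> x \in g -> y \in g ->
  u \in h -> v \in h -> ~~ alternate (cart_word g h) (x, u) (y, v).
Proof.
move=> xy uv xg yg uh vh; have := filter_all (pred2 x y) g.
have : x \in filter (pred2 x y) g by rewrite mem_filter /= eqxx.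
case Eg: (filter (pred2 x y) g) => [|z s] // _ /andP[/pred2P[] ez _]; subst z.
  exact: cart_word_cross_head Eg.
rewrite alternateC; apply: (cart_word_cross_head (s := s)); rewrite 1?eq_sym //.
by rewrite -Eg; apply: eq_filter => w /=; rewrite orbC.
Qed.

End CartesianWord.

Lemma size_cart_word (T U : finType) (g : seq T) (h : seq U) :
  size (cart_word g h) <= #|U| * size g + #|T| * size h + (#|U| ^ 2 - 1) * #|T|.
Proof.
have hN : ninserts [::] h <= #|U| - 1.
  have := uniq_size_le_card (undup_uniq h).
  have nil_sub : {subset [::] <= h} by [].
  case: (eqVneq h [::]) => [->|hn] //; move/(leq_trans (ninserts_lt hn nil_sub)).
  by case: #|U| => // n; rewrite subn1 ltnS.
have hS := sum_size_blocks [::] h.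
have hg := uniq_size_le_card (undup_first_uniq g).
have hh := uniq_size_le_card (undup_uniq h).
rewrite size_cat size_flatten_allpairs size_allpairs.
set m := #|T| in hg *; set n := #|U| in hN hS hh *.
set a := size (undup_first g) in hg *; set S := sumn _ in hS *.
set N := ninserts _ _ in hN hS; set k := size (undup h) in hh *.
have k1 : a * S <= m * size h + m * ((n - 1) * n).
  by rewrite -mulnDr leq_mul // (leq_trans hS) // leq_add2l leq_mul.
have k2 : m * ((n - 1) * n) <= (n ^ 2 - 1) * m.
  by rewrite mulnC leq_mul //; nia.
have k3 : size g * k <= n * size g by rewrite mulnC leq_mul.
by rewrite -addnA [leqLHS]addnC leq_add // (leq_trans k1) // leq_add2l.
Qed.

Theorem mainTheorem7 (T U : finType) (eG : rel T) (eH : rel U)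
  (lG lH : nat) :
  simple_graph eG -> simple_graph eH ->
  word_representable eG -> word_representable eH ->
  #|U| <= #|T| ->
  is_min_rep_length eG lG -> is_min_rep_length eH lH ->
  exists w : seq (T * U),
    represents (cart_rel eG eH) w /\
    size w <= #|U| * lG + #|T| * lH + (#|U| ^ 2 - 1) * #|T|.
Proof.
move=> _ _ _ _ _ [[g [[gT gG] <-]] _] [[h [[hU hH] <-]] _].
exists (cart_word g h); split; last exact: size_cart_word.
split=> [[x u]|[x u] [y v]]; first exact: mem_cart_word.
rewrite /cart_rel /=; have [<-{y} ne|xy _] := eqVneq x y.
  have uv : u != v by apply: contra_neq ne => ->.
  by rewrite (negbTE uv) /= orbF cart_word_row //; apply: hH.
have [<-|uv] := eqVneq u v; first by rewrite /= cart_word_col //; apply: gG.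
by rewrite (negbTE (cart_word_cross xy uv (gT x) (gT y) (hU u) (hU v))).
Qed.
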